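(* Let $K \geq 2$ be an integer and $\epsilon > 0$ small. For $x$ large put $$L = \lfloor (\log\log\log x)^{\frac13 - \epsilon}\rfloor + 1,\qquad Q = \exp\big((\log\log x)^{1-\epsilon}\big),\qquad M = \lfloor 16K^2 \rfloor + 1.$$ Suppose $p_1, \dots, p_T$ are distinct primes in the interval $[\exp((\log Q)^{\frac{4}{ML}}), Q]$ with $T \geq (2ML^2)^2$ and $$\frac12 (\log Q)^{\frac{1}{ML}} \leq \prod_{t=1}^{T}\left(1 - \frac{1}{p_t}\right)^{-1} \leq \frac32 (\log Q)^{\frac{1}{ML}}.$$ For $I \subseteq \{1,\dots,T\}$ let $m_I = \prod_{t\in I} p_t$, and let $$\mathcal{H} = \{0 \leq h \leq K\log x : h \not\equiv |I| - 1 \pmod{m_I} \text{ for every } I \subseteq \{1,\dots,T\} \text{ with } 1 \leq |I| \leq 2ML^2\}.$$ Then there is a constant $C = C(K,\epsilon)>0$ such that for all sufficiently large $x$ (depending only on $K,\epsilon$), and every such choice of primes, $$|\mathcal{H}| \leq C\,\frac{(16ML^2)^{8M^2L^4}(\log\log Q)^{4M^2L^4}}{(\log Q)^{2L}}\cdot K\log x.$$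
   Context: Here $h$ ranges over integers; $|I|$ denotes the cardinality of $I$. *)

From Stdlib Require Import Reals Lra Lia ZArith Arith List Znumtheory.
Import ListNotations.
Open Scope R_scope.

(* All sublists (= subsets, as increasing lists) of a list. *)
Fixpoint sublists (l : list nat) : list (list nat) :=
  match l with
  | [] => [[]]
  | a :: l' => let s := sublists l' in map (cons a) s ++ s
  end.

(* Subsets I of the index set {0,...,T-1} (the paper's {1,...,T}, shifted). *)
Definition index_subsets (T : nat) : list (list nat) := sublists (seq 0 T).

Definition m_I (p : nat -> nat) (I : list nat) : nat :=
  fold_right Nat.mul 1%nat (map p I).

Definition floorZ (r : R) : Z := Int_part r.

Definition L_of (eps x : R) : nat :=
  (Z.to_nat (floorZ (Rpower (ln (ln (ln x))) (1/3 - eps))) + 1)%nat.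

Definition Q_of (eps x : R) : R := exp (Rpower (ln (ln x)) (1 - eps)).

Definition M_of (K : nat) : nat := (16 * K * K + 1)%nat.

Definition admissibleb (p : nat -> nat) (T bound h : nat) : bool :=
  forallb (fun I =>
     if andb (1 <=? length I)%nat (length I <=? bound)%nat
     then negb (Nat.eqb (h mod m_I p I) ((length I - 1) mod m_I p I))
     else true) (index_subsets T).

Definition H_list (p : nat -> nat) (T bound : nat) (K x : R) : list nat :=
  filter (fun h => andb (if Rle_dec (INR h) (K * ln x) then true else false)
                        (admissibleb p T bound h))
         (seq 0 (Z.to_nat (up (K * ln x)) + 1)).

Definition euler_prod (p : nat -> nat) (T : nat) : R :=
  fold_right Rmult 1 (map (fun t => / (1 - / INR (p t))) (seq 0 T)).

From Stdlib Require Import Reals Lra Lia ZArith Arith List Znumtheory Permutation.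
Import ListNotations.
Open Scope R_scope.

(* Lemma 2.5: an upper bound for the set H of h <= K log x avoiding the
   residue |I| - 1 modulo m_I for every I with 1 <= |I| <= B := 2 M L^2.
   The proof is a Brun-type sieve with Lam := log log Q.

   1. If h is admissible then, for each r < B, at most r of the primes p_t
      satisfy h = r (mod p_t): otherwise r + 1 of them form a set I with
      h = |I| - 1 (mod m_I).  So h mod p_t < B for at most B^2 indices t.
   2. Hence the weight prod_t (1 - (1 - 1/Lam) [h mod p_t < B]), which equals
      Lam^-(number of small residues), is at least Lam^-(B^2) on H.  Brun's
      inequality bounds it by its truncated expansion over sets D of at most
      Kc indices (Kc even), and summing over h < N uses the Chinese remainder
      theorem: exactly B^|D| residues modulo m_D have all residues small.
   3. This yields |H| <= Lam^(B^2) (N (exp (-(1 - 1/Lam) s) + 2^-Kc exp (2 s))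
      + (1 + T B)^Kc) with s = sum_t B / p_t, and the hypothesis on the Euler
      product gives s = 2 L Lam + O(B).
   4. With Kc about 4 B + 12 L log log log x, both terms are at most
      exp (4 B) / (log Q)^(2L) times K log x, which gives the claim with C = 3. *)

Fixpoint rsum {A} (f : A -> R) (l : list A) : R :=
  match l with [] => 0 | a :: l' => f a + rsum f l' end.

Fixpoint rprod (f : nat -> R) (l : list nat) : R :=
  match l with [] => 1 | a :: l' => f a * rprod f l' end.

Definition indic (b : bool) : R := if b then 1 else 0.

Lemma rsum_app {A} (f : A -> R) l1 l2 : rsum f (l1 ++ l2) = rsum f l1 + rsum f l2.
Proof. induction l1; simpl; [lra | rewrite IHl1; lra]. Qed.

Lemma rsum_map {A B} (f : B -> R) (g : A -> B) l :
  rsum f (map g l) = rsum (fun x => f (g x)) l.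
Proof. induction l; simpl; [lra | rewrite IHl; lra]. Qed.

Lemma rsum_plus {A} (f g : A -> R) l : rsum (fun x => f x + g x) l = rsum f l + rsum g l.
Proof. induction l; simpl; [lra | rewrite IHl; lra]. Qed.

Lemma rsum_scal {A} (c : R) (f : A -> R) l : rsum (fun x => c * f x) l = c * rsum f l.
Proof. induction l; simpl; [lra | rewrite IHl; lra]. Qed.

Lemma rsum_const {A} (c : R) (l : list A) : rsum (fun _ => c) l = c * INR (length l).
Proof. induction l; simpl length; [simpl; lra | rewrite S_INR; simpl; rewrite IHl; ring]. Qed.

Lemma rsum_ext {A} (f g : A -> R) l :
  (forall x, In x l -> f x = g x) -> rsum f l = rsum g l.
Proof. induction l; simpl; intros H; auto. rewrite H, IHl; auto. Qed.

Lemma rsum_perm {A} (f : A -> R) l l' : Permutation l l' -> rsum f l = rsum f l'.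
Proof. induction 1; simpl; lra. Qed.

Lemma rsum_le {A} (f g : A -> R) l :
  (forall x, In x l -> f x <= g x) -> rsum f l <= rsum g l.
Proof.
  induction l; simpl; intros H; [lra |].
  assert (f a <= g a) by auto. assert (rsum f l <= rsum g l) by auto. lra.
Qed.

Lemma rsum_nonneg {A} (f : A -> R) l : (forall x, In x l -> 0 <= f x) -> 0 <= rsum f l.
Proof. intros H. rewrite <- (Rmult_0_l (INR (length l))), <- rsum_const. now apply rsum_le. Qed.

Lemma rsum_swap {A B} (F : A -> B -> R) l1 l2 :
  rsum (fun a => rsum (fun b => F a b) l2) l1 = rsum (fun b => rsum (fun a => F a b) l1) l2.
Proof.
  induction l1; simpl.
  - induction l2; simpl; lra.
  - rewrite IHl1, <- rsum_plus. reflexivity.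
Qed.

Lemma rsum_indic {A} (f : A -> bool) l : rsum (fun x => indic (f x)) l = INR (length (filter f l)).
Proof.
  induction l; simpl; [reflexivity |].
  unfold indic at 1; destruct (f a); simpl length; rewrite ?S_INR, IHl; lra.
Qed.

Lemma rsum_seq_shift (F : nat -> R) s n : rsum F (seq s n) = rsum (fun i => F (s + i)%nat) (seq 0 n).
Proof.
  revert s F; induction n as [|n IH]; intros s F; [reflexivity |].
  simpl. rewrite IH, (IH 1%nat).
  f_equal; [f_equal; lia | apply rsum_ext; intros; f_equal; lia].
Qed.

Lemma rsum_seq_blocks (F : nat -> R) a b :
  rsum F (seq 0 (b * a)) = rsum (fun j => rsum (fun i => F (a * j + i)%nat) (seq 0 a)) (seq 0 b).
Proof.
  induction b as [|b IH]; [reflexivity |].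
  replace (S b * a)%nat with (b * a + a)%nat by lia.
  rewrite seq_app, rsum_app, IH, seq_S, rsum_app, (rsum_seq_shift F). simpl.
  f_equal. rewrite Rplus_0_r. apply rsum_ext; intros; f_equal; lia.
Qed.

Lemma rprod_nonneg c l : (forall t, In t l -> 0 <= c t) -> 0 <= rprod c l.
Proof. induction l; simpl; intros H; [lra |]. apply Rmult_le_pos; auto. Qed.

Lemma rprod_le f g l : (forall t, In t l -> 0 <= f t <= g t) -> rprod f l <= rprod g l.
Proof.
  induction l; simpl; intros H; [lra |].
  assert (0 <= f a <= g a) by auto.
  assert (0 <= rprod f l) by (apply rprod_nonneg; intros; apply H; simpl; auto).
  apply Rmult_le_compat; try lra. apply IHl; intros; apply H; simpl; auto.
Qed.

Lemma rprod_abs c r l : (forall t, Rabs (c t) <= r t) -> Rabs (rprod c l) <= rprod r l.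
Proof.
  induction l; simpl; intros H; [rewrite Rabs_R1; lra |].
  rewrite Rabs_mult. apply Rmult_le_compat; try apply Rabs_pos; auto.
Qed.

Lemma rprod_mult c d l : rprod (fun t => c t * d t) l = rprod c l * rprod d l.
Proof. induction l; simpl; [lra |]. rewrite IHl; ring. Qed.

Lemma rprod_const c l : rprod (fun _ => c) l = c ^ length l.
Proof. induction l; simpl; [lra |]. rewrite IHl; ring. Qed.

Lemma rprod_exp_sum c l : rprod (fun t => exp (c t)) l = exp (rsum c l).
Proof. induction l; simpl; [rewrite exp_0; lra | rewrite IHl, exp_plus; lra]. Qed.

(* [1 + c <= exp c] termwise. *)
Lemma rprod_le_exp c l :
  (forall t, In t l -> 0 <= 1 + c t) -> rprod (fun t => 1 + c t) l <= exp (rsum c l).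
Proof.
  intros H. rewrite <- rprod_exp_sum. apply rprod_le.
  intros t Ht; split; [auto | apply exp_ineq1_le].
Qed.

(** Brun's truncated inclusion-exclusion. *)

Lemma rprod_expand c l : rsum (rprod c) (sublists l) = rprod (fun t => 1 + c t) l.
Proof.
  induction l as [|a l IH]; simpl; [lra |].
  rewrite rsum_app, rsum_map, IH. simpl. rewrite rsum_scal, IH. lra.
Qed.

Definition brun_sum (K : nat) (c : nat -> R) (l : list nat) : R :=
  rsum (fun D => if (length D <=? K)%nat then rprod c D else 0) (sublists l).

Lemma brun_sum_0 c l : brun_sum 0 c l = 1.
Proof.
  unfold brun_sum. induction l as [|a l IH]; simpl; [lra |].
  rewrite rsum_app, rsum_map, IH. simpl. rewrite rsum_const. lra.
Qed.

Lemma brun_sum_cons K c a l :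
  brun_sum (S K) c (a :: l) = c a * brun_sum K c l + brun_sum (S K) c l.
Proof.
  unfold brun_sum. simpl. rewrite rsum_app, rsum_map, <- rsum_scal. f_equal.
  apply rsum_ext; intros D _. simpl. destruct (length D <=? K)%nat; lra.
Qed.

Lemma brun_alternating (c : nat -> R) l : (forall t, In t l -> -1 <= c t <= 0) -> forall K,
  (Nat.even K = true -> rprod (fun t => 1 + c t) l <= brun_sum K c l) /\
  (Nat.even K = false -> brun_sum K c l <= rprod (fun t => 1 + c t) l).
Proof.
  induction l as [|a l IH]; intros Hc K.
  - unfold brun_sum; simpl. split; intros; lra.
  - destruct K as [|K].
    + rewrite brun_sum_0. split; intros E; [| discriminate].
      assert (0 <= rprod (fun t => 1 + c t) (a :: l) <= rprod (fun _ => 1) (a :: l)).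
      { split; [apply rprod_nonneg | apply rprod_le];
          intros t Ht; specialize (Hc t Ht); lra. }
      rewrite rprod_const, pow1 in H. lra.
    + assert (Hl : forall t, In t l -> -1 <= c t <= 0) by (intros; apply Hc; simpl; auto).
      assert (Ha : -1 <= c a <= 0) by (apply Hc; simpl; auto).
      destruct (IH Hl K) as [H1 H2], (IH Hl (S K)) as [H3 H4].
      rewrite brun_sum_cons. simpl rprod. rewrite Nat.even_succ, <- Nat.negb_even in *.
      destruct (Nat.even K); simpl in *; split; intros E; try discriminate.
      * specialize (H1 eq_refl). specialize (H4 eq_refl).
        assert (c a * brun_sum K c l <= c a * rprod (fun t => 1 + c t) l)
          by (apply Rmult_le_compat_neg_l; lra). lra.
      * specialize (H2 eq_refl). specialize (H3 eq_refl).
        assert (c a * rprod (fun t => 1 + c t) l <= c a * brun_sum K c l)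
          by (apply Rmult_le_compat_neg_l; lra). lra.
Qed.

(* Truncation error: terms with |D| > K are dominated by 2^(|D|-K) |prod c|. *)
Lemma brun_sum_tail K c r l : (forall t, Rabs (c t) <= r t) ->
  brun_sum K c l <= rprod (fun t => 1 + c t) l + (/ 2) ^ K * rprod (fun t => 1 + 2 * r t) l.
Proof.
  intros H. unfold brun_sum. rewrite <- !rprod_expand, <- rsum_scal, <- rsum_plus.
  apply rsum_le. intros D _.
  assert (Hr : forall t, 0 <= r t) by (intro t; specialize (H t); pose proof (Rabs_pos (c t)); lra).
  assert (A1 : Rabs (rprod c D) <= rprod r D) by (apply rprod_abs; auto).
  assert (A2 : 0 <= rprod r D) by (apply rprod_nonneg; auto).
  assert (E2 : rprod (fun t => 2 * r t) D = 2 ^ length D * rprod r D)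
    by (rewrite rprod_mult, rprod_const; reflexivity).
  assert (A3 : 0 <= (/ 2) ^ K * 2 ^ length D) by (apply Rmult_le_pos; apply pow_le; lra).
  rewrite E2. destruct (length D <=? K)%nat eqn:E.
  - assert (0 <= (/ 2) ^ K * 2 ^ length D * rprod r D) by (apply Rmult_le_pos; auto). lra.
  - apply Nat.leb_gt in E.
    assert (Hge : 1 <= (/ 2) ^ K * 2 ^ length D).
    { replace (length D) with (K + (length D - K))%nat by lia.
      rewrite pow_add, <- Rmult_assoc, <- Rpow_mult_distr, Rinv_l, pow1, Rmult_1_l by lra.
      apply pow_R1_Rle; lra. }
    pose proof (Rle_abs (- rprod c D)). rewrite Rabs_Ropp in *.
    assert (rprod r D <= (/ 2) ^ K * 2 ^ length D * rprod r D) by nra.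
    lra.
Qed.

Lemma brun_sum_const K c l : 0 <= c -> brun_sum K (fun _ => c) l <= (1 + INR (length l) * c) ^ K.
Proof.
  intros Hc. revert K; induction l as [|a l IH]; intros K.
  - unfold brun_sum; simpl. rewrite Rmult_0_l, Rplus_0_r, pow1. lra.
  - destruct K as [|K]; [rewrite brun_sum_0; simpl; lra |].
    rewrite brun_sum_cons. simpl length. rewrite S_INR.
    specialize (IH K) as H1. specialize (IH (S K)) as H2. simpl pow in *.
    set (n := INR (length l)) in *. assert (0 <= n) by apply pos_INR.
    set (X := (1 + n * c) ^ K) in *. set (Y := (1 + (n + 1) * c) ^ K).
    assert (HXY : X <= Y) by (apply pow_incr; nra).
    assert (0 <= X) by (apply pow_le; nra).
    assert (c * brun_sum K (fun _ => c) l <= c * X) by (apply Rmult_le_compat_l; auto).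
    assert ((1 + (n + 1) * c) * X <= (1 + (n + 1) * c) * Y) by (apply Rmult_le_compat_l; nra).
    lra.
Qed.

Lemma rsum_indic_below B q : (B <= q)%nat -> rsum (fun v => indic (v <? B)%nat) (seq 0 q) = INR B.
Proof.
  intros H. replace q with (B + (q - B))%nat by lia. rewrite seq_app, rsum_app.
  rewrite (rsum_ext _ (fun _ => 1) (seq 0 B)), (rsum_ext _ (fun _ => 0) (seq (0 + B) _)),
    !rsum_const, length_seq; [lra | |].
  - intros v Hv. apply in_seq in Hv. unfold indic. destruct (Nat.ltb_spec v B); lia || lra.
  - intros v Hv. apply in_seq in Hv. unfold indic. destruct (Nat.ltb_spec v B); lia || lra.
Qed.

Lemma rsum_indic_below_injective (g : nat -> nat) B q : (B <= q)%nat ->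
  (forall j, (j < q)%nat -> (g j < q)%nat) ->
  (forall j1 j2, (j1 < q)%nat -> (j2 < q)%nat -> g j1 = g j2 -> j1 = j2) ->
  rsum (fun j => indic (g j <? B)%nat) (seq 0 q) = INR B.
Proof.
  intros HB Hrange Hinj. rewrite <- (rsum_map (fun v => indic (v <? B)%nat)).
  rewrite (rsum_perm _ _ (seq 0 q)); [now apply rsum_indic_below |].
  apply Permutation_map_same_l.
  - apply NoDup_map_NoDup_ForallPairs; [| apply seq_NoDup].
    intros a b Ha Hb E. apply in_seq in Ha, Hb. apply Hinj; lia.
  - intros v Hv. apply in_map_iff in Hv. destruct Hv as [j [<- Hj]].
    apply in_seq in Hj. apply in_seq. specialize (Hrange j ltac:(lia)). lia.
Qed.

Definition distinct_primes (p : nat -> nat) (D : list nat) : Prop :=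
  NoDup (map p D) /\ forall s, In s D -> prime (Z.of_nat (p s)).

Lemma distinct_primes_cons p t D : distinct_primes p (t :: D) ->
  distinct_primes p D /\ prime (Z.of_nat (p t)) /\ ~ In (p t) (map p D).
Proof.
  intros [ND HP]. simpl in ND. inversion ND; subst.
  split; [split; auto; intros; apply HP; simpl; auto |]. split; auto. apply HP; simpl; auto.
Qed.

Lemma m_I_cons p t D : m_I p (t :: D) = (p t * m_I p D)%nat.
Proof. reflexivity. Qed.

Lemma m_I_pos p D : (forall s, In s D -> 0 < p s)%nat -> (0 < m_I p D)%nat.
Proof.
  induction D as [|a D IH]; intros H; [unfold m_I; simpl; lia |]. rewrite m_I_cons.
  assert (0 < p a)%nat by (apply H; simpl; auto).
  assert (0 < m_I p D)%nat by (apply IH; intros; apply H; simpl; auto). nia.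
Qed.

Lemma dvd_m_I p D t : In t D -> Nat.divide (p t) (m_I p D).
Proof.
  induction D as [|a D IH]; simpl; intros H; [contradiction |]. rewrite m_I_cons.
  destruct H as [-> | H]; [apply Nat.divide_factor_l |].
  apply Nat.divide_mul_r, IH, H.
Qed.

Lemma Nat_Z_divide a b : Nat.divide a b <-> (Z.of_nat a | Z.of_nat b)%Z.
Proof.
  split; [intros [k ->]; exists (Z.of_nat k); lia |].
  intros [k Hk]. destruct (Nat.eq_dec a 0) as [-> | Ha]; [exists 0%nat; lia |].
  assert (0 <= k)%Z by nia. exists (Z.to_nat k). nia.
Qed.

Lemma prime_not_dvd_m_I p q D : prime (Z.of_nat q) -> distinct_primes p D -> ~ In q (map p D) ->
  ~ (Z.of_nat q | Z.of_nat (m_I p D))%Z.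
Proof.
  intros Hq. induction D as [|a D IH]; intros HD Hout Hdvd.
  - apply Z.divide_pos_le in Hdvd; [| simpl; lia]. apply prime_ge_2 in Hq. simpl in Hdvd. lia.
  - destruct (distinct_primes_cons _ _ _ HD) as [HD' [Ha _]].
    rewrite m_I_cons, Nat2Z.inj_mul in Hdvd. apply prime_mult in Hdvd; auto.
    destruct Hdvd as [Hdvd | Hdvd].
    + apply prime_div_prime in Hdvd; auto. apply Hout. simpl. left. lia.
    + apply IH; auto. intros Hin. apply Hout. simpl; auto.
Qed.

Lemma m_I_dvd p D X : distinct_primes p D ->
  (forall s, In s D -> Nat.divide (p s) X) -> Nat.divide (m_I p D) X.
Proof.
  induction D as [|a D IH]; intros HD H; [apply Nat.divide_1_l |].
  destruct (distinct_primes_cons _ _ _ HD) as [HD' [Ha Hout]]. rewrite m_I_cons.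
  destruct (IH HD' ltac:(intros; apply H; simpl; auto)) as [k Hk].
  assert (Hdiv : (Z.of_nat (p a) | Z.of_nat (m_I p D) * Z.of_nat k)%Z).
  { rewrite <- Nat2Z.inj_mul, <- Nat_Z_divide, Nat.mul_comm, <- Hk. apply H; simpl; auto. }
  apply Gauss in Hdiv; [| apply prime_rel_prime; auto; now apply prime_not_dvd_m_I].
  apply Nat_Z_divide in Hdiv. destruct Hdiv as [j ->]. exists j. lia.
Qed.

Lemma affine_mod_injective q m i j1 j2 : prime (Z.of_nat q) -> ~ (Z.of_nat q | Z.of_nat m)%Z ->
  (j1 < q)%nat -> (j2 < q)%nat -> ((m * j1 + i) mod q = (m * j2 + i) mod q)%nat -> j1 = j2.
Proof.
  intros Hq Hm. pose proof (prime_ge_2 _ Hq) as Hq2.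
  enough (Hle : forall a b, (a <= b < q)%nat -> ((m * a + i) mod q = (m * b + i) mod q)%nat -> a = b).
  { intros H1 H2 E. destruct (Nat.le_ge_cases j1 j2); [| symmetry]; apply Hle; auto; lia. }
  intros a b Hab E.
  assert (Hd : Nat.divide q (m * (b - a))).
  { pose proof (Nat.div_mod_eq (m * a + i) q). pose proof (Nat.div_mod_eq (m * b + i) q).
    exists ((m * b + i) / q - (m * a + i) / q)%nat. rewrite Nat.mul_sub_distr_r. nia. }
  apply Nat_Z_divide in Hd. rewrite Nat2Z.inj_mul in Hd. apply prime_mult in Hd; auto.
  destruct Hd as [Hd | Hd]; [contradiction |].
  destruct (Nat.eq_dec (b - a) 0); [lia |]. apply Z.divide_pos_le in Hd; lia.
Qed.

Definition small_residues (p : nat -> nat) (B : nat) (D : list nat) (h : nat) : bool :=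
  forallb (fun t => h mod p t <? B)%nat D.

Definition count_small (p : nat -> nat) (B : nat) (D : list nat) (N : nat) : R :=
  rsum (fun h => indic (small_residues p B D h)) (seq 0 N).

Lemma indic_andb a b : indic (a && b) = indic a * indic b.
Proof. destruct a, b; unfold indic; simpl; lra. Qed.

Lemma forallb_ext_in {A} (f g : A -> bool) l :
  (forall x, In x l -> f x = g x) -> forallb f l = forallb g l.
Proof. induction l; simpl; intros H; auto. rewrite H, IHl; auto. Qed.

Lemma small_residues_periodic p B D j i :
  small_residues p B D (m_I p D * j + i) = small_residues p B D i.
Proof.
  unfold small_residues. apply forallb_ext_in. intros t Ht.
  destruct (dvd_m_I p D t Ht) as [k ->].
  replace (k * p t * j + i)%nat with (i + k * j * p t)%nat by lia.
  now rewrite Nat.Div0.mod_add.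
Qed.

(* Chinese remainder count: over one period m_I there are exactly B^|D| such h. *)
Lemma count_small_period p B D : distinct_primes p D -> (forall s, In s D -> B < p s)%nat ->
  count_small p B D (m_I p D) = INR B ^ length D.
Proof.
  induction D as [|t D IH]; intros HD HB; [unfold count_small, indic; simpl; lra |].
  destruct (distinct_primes_cons _ _ _ HD) as [HD' [Ht Hout]].
  assert (HBt : (B < p t)%nat) by (apply HB; simpl; auto).
  pose proof (prime_not_dvd_m_I _ _ _ Ht HD' Hout) as Hcop.
  unfold count_small. rewrite m_I_cons, rsum_seq_blocks.
  rewrite (rsum_ext _ (fun j => rsum (fun i =>
     indic ((m_I p D * j + i) mod p t <? B)%nat * indic (small_residues p B D i)) (seq 0 (m_I p D)))).
  2:{ intros j _. apply rsum_ext. intros i _. unfold small_residues at 1. simpl forallb.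
      rewrite indic_andb. fold (small_residues p B D (m_I p D * j + i)).
      now rewrite small_residues_periodic. }
  rewrite rsum_swap, (rsum_ext _ (fun i => INR B * indic (small_residues p B D i))).
  - rewrite rsum_scal. fold (count_small p B D (m_I p D)).
    rewrite IH; [simpl; ring | auto | intros; apply HB; simpl; auto].
  - intros i _. rewrite (rsum_ext _ (fun j => indic (small_residues p B D i) *
        indic ((fun j => (m_I p D * j + i) mod p t) j <? B)%nat)) by (intros; simpl; lra).
    rewrite rsum_scal, rsum_indic_below_injective; [lra | lia | |].
    + intros; apply Nat.mod_upper_bound; lia.
    + intros j1 j2 H1 H2 E. now apply (affine_mod_injective (p t) (m_I p D) i).
Qed.

Lemma count_small_approx p B D N : distinct_primes p D -> (forall s, In s D -> B < p s)%nat ->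
  Rabs (count_small p B D N - INR N * (INR B ^ length D / INR (m_I p D))) <= INR B ^ length D.
Proof.
  intros HD HB.
  assert (Hm : (0 < m_I p D)%nat) by (apply m_I_pos; intros s Hs; specialize (HB s Hs); lia).
  set (m := m_I p D) in *. set (P := INR B ^ length D).
  assert (HP : count_small p B D m = P) by (apply count_small_period; auto).
  pose proof (Nat.div_mod_eq N m) as HN. set (q := (N / m)%nat) in *. set (r := (N mod m)%nat) in *.
  assert (Hr : (r < m)%nat) by (apply Nat.mod_upper_bound; lia).
  assert (Hsplit : count_small p B D N = INR q * P + count_small p B D r).
  { unfold count_small. rewrite HN, Nat.mul_comm, seq_app, rsum_app, rsum_seq_blocks.
    rewrite (rsum_ext _ (fun _ => P)), rsum_const, length_seq, (rsum_seq_shift _ (0 + q * m)).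
    - f_equal; [ring |]. apply rsum_ext. intros i _.
      replace (0 + q * m + i)%nat with (m * q + i)%nat by lia. now rewrite small_residues_periodic.
    - intros j _. rewrite <- HP. apply rsum_ext. intros i _. now rewrite small_residues_periodic. }
  assert (Hrem : 0 <= count_small p B D r <= P).
  { unfold count_small. split; [apply rsum_nonneg; intros; unfold indic; destruct small_residues; lra |].
    rewrite <- HP. unfold count_small. replace m with (r + (m - r))%nat by lia.
    rewrite seq_app, rsum_app.
    assert (0 <= rsum (fun h => indic (small_residues p B D h)) (seq (0 + r) (m - r)))
      by (apply rsum_nonneg; intros; unfold indic; destruct small_residues; lra). lra. }
  assert (HmR : 0 < INR m) by (apply lt_0_INR; lia).
  assert (HrR : INR r < INR m) by (apply lt_INR; lia).
  assert (HP0 : 0 <= P) by (apply pow_le, pos_INR).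
  assert (Hfrac : 0 <= INR r * (P / INR m) <= P).
  { split; [apply Rmult_le_pos; [apply pos_INR | apply Rmult_le_pos; [lra | apply Rlt_le, Rinv_0_lt_compat; lra]] |].
    apply Rmult_le_reg_r with (INR m); auto. unfold Rdiv.
    rewrite Rmult_assoc, (Rmult_assoc P), Rinv_l by lra. pose proof (pos_INR r). nra. }
  rewrite Hsplit, HN, plus_INR, mult_INR.
  replace ((INR m * INR q + INR r) * (P / INR m)) with (INR q * P + INR r * (P / INR m)) by (field; lra).
  apply Rabs_le. lra.
Qed.

Lemma sublists_incl_NoDup l D : In D (sublists l) -> incl D l /\ (NoDup l -> NoDup D).
Proof.
  revert D; induction l as [|a l IH]; simpl; intros D H.
  - destruct H as [<- | []]. split; [intros x [] | constructor].
  - apply in_app_or in H. destruct H as [H | H].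
    + apply in_map_iff in H. destruct H as [D' [<- HD']]. destruct (IH D' HD') as [H1 H2].
      split; [intros x [-> | Hx]; simpl; auto |].
      intros ND. inversion ND; subst. constructor; auto.
    + destruct (IH D H) as [H1 H2]. split; [intros x Hx; simpl; auto |].
      intros ND; inversion ND; auto.
Qed.

Lemma nil_in_sublists l : In [] (sublists l).
Proof. induction l; simpl; auto. apply in_or_app; auto. Qed.

Lemma firstn_in_sublists n l : In (firstn n l) (sublists l).
Proof.
  revert n; induction l as [|a l IH]; intros n; [destruct n; simpl; auto |].
  destruct n; simpl; apply in_or_app; [right; apply nil_in_sublists | left; apply in_map, IH].
Qed.

Lemma sublists_filter f l D : In D (sublists (filter f l)) -> In D (sublists l).
Proof.
  revert D; induction l as [|a l IH]; intros D; simpl; [auto |].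
  destruct (f a); simpl; intros H; apply in_or_app; [| right; auto].
  apply in_app_or in H. destruct H as [H | H]; [left | right; auto].
  apply in_map_iff in H. destruct H as [D' [<- HD']]. apply in_map, IH, HD'.
Qed.

Lemma rprod_weight (z : R) (f : nat -> bool) l :
  rprod (fun t => 1 + - (1 - z) * indic (f t)) l = z ^ length (filter f l).
Proof. induction l; simpl; auto. unfold indic at 1. destruct (f a); simpl; rewrite IHl; ring. Qed.

Lemma rprod_indic_small p B D h :
  rprod (fun t => indic (h mod p t <? B)%nat) D = indic (small_residues p B D h).
Proof.
  induction D as [|a D IH]; [reflexivity |]. unfold small_residues in *. simpl.
  rewrite indic_andb, IH. reflexivity.
Qed.

Lemma rprod_ratio p B D : (forall t, In t D -> 0 < p t)%nat ->
  rprod (fun t => INR B / INR (p t)) D = INR B ^ length D / INR (m_I p D).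
Proof.
  induction D as [|a D IH]; intros H; [unfold m_I; simpl; lra |].
  simpl length. rewrite m_I_cons, mult_INR. simpl rprod. rewrite IH by (intros; apply H; simpl; auto).
  assert (0 < INR (p a)) by (apply lt_0_INR, H; simpl; auto).
  assert (0 < INR (m_I p D)) by (apply lt_0_INR, m_I_pos; intros; apply H; simpl; auto).
  simpl. field. lra.
Qed.

Section DistinctPrimes.
Variables (p : nat -> nat) (T : nat).
Hypothesis p_prime : forall t, (t < T)%nat -> prime (Z.of_nat (p t)).
Hypothesis p_inj : forall t1 t2, (t1 < T)%nat -> (t2 < T)%nat -> p t1 = p t2 -> t1 = t2.

Lemma distinct_primes_incl D : NoDup D -> incl D (seq 0 T) -> distinct_primes p D.
Proof.
  intros ND Hincl. split.
  - apply NoDup_map_NoDup_ForallPairs; auto.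
    intros a b Ha Hb E. apply Hincl, in_seq in Ha. apply Hincl, in_seq in Hb. apply p_inj; lia.
  - intros s Hs. apply Hincl, in_seq in Hs. apply p_prime; lia.
Qed.

Lemma distinct_primes_sublist D : In D (sublists (seq 0 T)) -> distinct_primes p D.
Proof.
  intros HD. destruct (sublists_incl_NoDup _ _ HD) as [Hincl HND].
  apply distinct_primes_incl; auto. apply HND, seq_NoDup.
Qed.

(* If h is admissible, fewer than r+1 primes p_t satisfy h = r mod p_t (r < B):
   otherwise r+1 of them would form an I with h = |I| - 1 mod m_I. *)
Lemma admissible_residue_class B h r : admissibleb p T B h = true -> (r < B)%nat ->
  (length (filter (fun t => h mod p t =? r) (seq 0 T)) <= r)%nat.
Proof.
  intros Ha Hr. apply Nat.nlt_ge. intros Hc.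
  set (f := fun t => (h mod p t =? r)%nat).
  set (I := firstn (S r) (filter f (seq 0 T))).
  assert (HIf : In I (sublists (filter f (seq 0 T)))) by apply firstn_in_sublists.
  assert (HIsub : In I (sublists (seq 0 T))) by (eapply sublists_filter; eauto).
  assert (HIres : forall s, In s I -> (h mod p s = r)%nat).
  { intros s Hs. apply (proj1 (sublists_incl_NoDup _ _ HIf)), filter_In in Hs.
    apply Nat.eqb_eq, Hs. }
  assert (HIlen : length I = S r) by (unfold I, f; rewrite length_firstn; lia).
  (* h = r mod p_s for all s in I, hence h = r mod m_I by the Chinese remainder theorem. *)
  assert (Hmod : (h mod m_I p I = r mod m_I p I)%nat).
  { assert (Hd : Nat.divide (m_I p I) (h - r)).
    { apply m_I_dvd; [now apply distinct_primes_sublist |]. intros s Hs.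
      exists (h / p s)%nat. pose proof (Nat.div_mod_eq h (p s)). rewrite (HIres s Hs) in *. lia. }
    assert (Hhr : (r <= h)%nat).
    { destruct I as [|s I']; [discriminate |]. rewrite <- (HIres s (or_introl eq_refl)).
      apply Nat.Div0.mod_le. }
    destruct Hd as [k Hk]. replace h with (r + k * m_I p I)%nat by lia. apply Nat.Div0.mod_add. }
  unfold admissibleb in Ha. rewrite forallb_forall in Ha.
  specialize (Ha I HIsub). rewrite HIlen, Nat.sub_succ, Nat.sub_0_r, Hmod, Nat.eqb_refl in Ha.
  replace (1 <=? S r)%nat with true in Ha by (symmetry; apply Nat.leb_le; lia).
  replace (S r <=? B)%nat with true in Ha by (symmetry; apply Nat.leb_le; lia).
  discriminate.
Qed.

(* Summing over the residue classes r < B: an admissible h has at most B^2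
   small residues. *)
Lemma admissible_few_small_residues B h : admissibleb p T B h = true ->
  (length (filter (fun t => h mod p t <? B) (seq 0 T)) <= B * B)%nat.
Proof.
  intros Ha. enough (H : forall b, (b <= B)%nat ->
    (length (filter (fun t => h mod p t <? b) (seq 0 T)) <= b * b)%nat) by auto.
  induction b as [|b IH]; intros Hb.
  - rewrite (filter_ext _ (fun _ => false)), filter_false; simpl; [lia |].
    intros t. apply Nat.ltb_ge; lia.
  - assert (Hsplit : forall l, (length (filter (fun t => h mod p t <? S b) l) =
      length (filter (fun t => h mod p t <? b) l) + length (filter (fun t => h mod p t =? b) l))%nat).
    { clear IH. induction l as [|a l IHl]; simpl; auto.
      destruct (Nat.ltb_spec (h mod p a) (S b)), (Nat.ltb_spec (h mod p a) b),
        (Nat.eqb_spec (h mod p a) b); simpl; lia. }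
    rewrite Hsplit. pose proof (admissible_residue_class B h b Ha ltac:(lia)).
    specialize (IH ltac:(lia)). nia.
Qed.

(** With z = 1/Lam, the weight prod_t (1 - (1-z)[h mod p_t < B])
    equals z^(number of small residues of h), which is at least z^(B^2) for
    admissible h; Brun's truncation of this weight can be summed over h. *)

Section Sieve.
Variables (B N K : nat) (Lam : R).
Hypothesis Lam_ge1 : 1 <= Lam.
Hypothesis K_even : Nat.even K = true.
Hypothesis p_large : forall t, (t < T)%nat -> (B < p t)%nat.

Definition sieve_weight (h t : nat) : R := - (1 - / Lam) * indic (h mod p t <? B)%nat.

Lemma inv_Lam_range : 0 < / Lam <= 1.
Proof.
  split; [apply Rinv_0_lt_compat; lra |].
  rewrite <- Rinv_1. apply Rinv_le_contravar; lra.
Qed.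

Lemma admissible_indicator_bound h :
  indic (admissibleb p T B h) <= Lam ^ (B * B) * brun_sum K (sieve_weight h) (seq 0 T).
Proof.
  pose proof inv_Lam_range as Hz.
  destruct (brun_alternating (sieve_weight h) (seq 0 T)
    ltac:(intros t _; unfold sieve_weight, indic; destruct (h mod p t <? B)%nat; lra) K)
    as [Hbrun _].
  specialize (Hbrun K_even). unfold sieve_weight in Hbrun at 1. rewrite rprod_weight in Hbrun.
  set (n := length _) in Hbrun.
  assert (HLam : 0 <= Lam ^ (B * B)) by (apply pow_le; lra).
  assert (0 <= (/ Lam) ^ n) by (apply pow_le; lra).
  unfold indic. destruct (admissibleb p T B h) eqn:Ha; [| apply Rmult_le_pos; lra].
  assert (Hn : (/ Lam) ^ (B * B) <= (/ Lam) ^ n).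
  { pose proof (admissible_few_small_residues B h Ha) as Hn.
    replace (B * B)%nat with (n + (B * B - n))%nat by lia. rewrite pow_add.
    assert ((/ Lam) ^ (B * B - n) <= 1) by (rewrite <- (pow1 (B * B - n)); apply pow_incr; lra).
    nra. }
  assert (1 = Lam ^ (B * B) * (/ Lam) ^ (B * B))
    by (rewrite <- Rpow_mult_distr, Rinv_r, pow1; lra).
  nra.
Qed.

(* Summing one term of the truncated expansion over h < N: the main part
   comes from the density B^|D| / m_D, the rest from count_small_approx. *)
Lemma sieve_term_bound D : In D (sublists (seq 0 T)) ->
  rsum (fun h => rprod (sieve_weight h) D) (seq 0 N) <=
  INR N * rprod (fun t => - (1 - / Lam) * (INR B / INR (p t))) D
  + rprod (fun _ => (1 - / Lam) * INR B) D.
Proof.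
  intros HD. pose proof inv_Lam_range as Hz. pose proof (distinct_primes_sublist D HD) as Hprimes.
  assert (HB : forall s, In s D -> (B < p s)%nat).
  { intros s Hs. apply (proj1 (sublists_incl_NoDup _ _ HD)), in_seq in Hs. apply p_large; lia. }
  unfold sieve_weight. rewrite (rsum_ext _ (fun h => (- (1 - / Lam)) ^ length D * indic (small_residues p B D h))).
  2:{ intros h _. now rewrite rprod_mult, rprod_const, rprod_indic_small. }
  rewrite rsum_scal, !rprod_mult, !rprod_const, rprod_ratio
    by (intros t Ht; specialize (HB t Ht); lia).
  fold (count_small p B D N). pose proof (count_small_approx p B D N Hprimes HB) as Happrox.
  set (k := length D) in *. set (X := count_small p B D N) in *.
  set (Y := INR B ^ k / INR (m_I p D)) in *.
  assert (Habs : Rabs ((- (1 - / Lam)) ^ k) = (1 - / Lam) ^ k)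
    by (rewrite <- RPow_abs, Rabs_Ropp, Rabs_right; lra).
  assert (Rabs ((- (1 - / Lam)) ^ k * X - (- (1 - / Lam)) ^ k * (INR N * Y)) <= (1 - / Lam) ^ k * INR B ^ k).
  { rewrite <- Rmult_minus_distr_l, Rabs_mult, Habs. apply Rmult_le_compat_l; auto. apply pow_le; lra. }
  pose proof (Rle_abs ((- (1 - / Lam)) ^ k * X - (- (1 - / Lam)) ^ k * (INR N * Y))).
  lra.
Qed.

Lemma sieve_upper_bound :
  INR (length (filter (admissibleb p T B) (seq 0 N))) <=
  Lam ^ (B * B) * (INR N * brun_sum K (fun t => - (1 - / Lam) * (INR B / INR (p t))) (seq 0 T)
                   + brun_sum K (fun _ => (1 - / Lam) * INR B) (seq 0 T)).
Proof.
  assert (HLam : 0 <= Lam ^ (B * B)) by (apply pow_le; lra).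
  rewrite <- rsum_indic. eapply Rle_trans; [apply rsum_le; intros h _; apply admissible_indicator_bound |].
  rewrite rsum_scal. apply Rmult_le_compat_l; auto.
  unfold brun_sum. rewrite rsum_swap, <- rsum_scal, <- rsum_plus. apply rsum_le. intros D HD.
  destruct (length D <=? K)%nat; [now apply sieve_term_bound |].
  rewrite rsum_const. lra.
Qed.

(* The sieve bound in closed form, with s = sum_t B / p_t: Brun's truncation
   error is controlled by the tail bound, the remainder terms by the
   binomial bound. *)
Lemma admissible_count_bound :
  let s := rsum (fun t => INR B / INR (p t)) (seq 0 T) in
  INR (length (filter (admissibleb p T B) (seq 0 N))) <=
  Lam ^ (B * B) * (INR N * (exp (- (1 - / Lam) * s) + (/ 2) ^ K * exp (2 * s))
                   + (1 + INR T * INR B) ^ K).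
Proof.
  intros s. pose proof inv_Lam_range as Hz.
  assert (Hratio : forall t, 0 <= INR B / INR (p t)).
  { intros t. destruct (Nat.eq_dec (p t) 0) as [E | E].
    - rewrite E. simpl. unfold Rdiv. rewrite Rinv_0. lra.
    - apply Rmult_le_pos; [apply pos_INR | apply Rlt_le, Rinv_0_lt_compat, lt_0_INR; lia]. }
  assert (Hratio1 : forall t, In t (seq 0 T) -> INR B / INR (p t) <= 1).
  { intros t Ht. apply in_seq in Ht. specialize (p_large t ltac:(lia)).
    apply lt_INR in p_large. pose proof (pos_INR B).
    apply Rmult_le_reg_r with (INR (p t)); [lra |]. field_simplify; lra. }
  assert (HLam : 0 <= Lam ^ (B * B)) by (apply pow_le; lra).
  eapply Rle_trans; [apply sieve_upper_bound |]. apply Rmult_le_compat_l; auto.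
  apply Rplus_le_compat; [apply Rmult_le_compat_l; [apply pos_INR |] |].
  - eapply Rle_trans; [apply (brun_sum_tail K _ (fun t => INR B / INR (p t))) |].
    { intros t. rewrite Rabs_mult, Rabs_Ropp, Rabs_right, (Rabs_right (_ / _)) by (auto using Rle_ge; lra).
      specialize (Hratio t). nra. }
    apply Rplus_le_compat; [| apply Rmult_le_compat_l; [apply pow_le; lra |]].
    + eapply Rle_trans; [apply rprod_le_exp |].
      * intros t Ht. specialize (Hratio1 t Ht). nra.
      * rewrite rsum_scal. apply Rle_refl.
    + eapply Rle_trans; [apply rprod_le_exp |].
      * intros t Ht. specialize (Hratio t). lra.
      * rewrite rsum_scal. apply Rle_refl.
  - eapply Rle_trans; [apply brun_sum_const; pose proof (pos_INR B); nra |].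
    rewrite length_seq. apply pow_incr.
    assert (0 <= INR T * INR B) by (apply Rmult_le_pos; apply pos_INR).
    assert (0 <= / Lam * (INR T * INR B)) by (apply Rmult_le_pos; lra).
    split; nra.
Qed.

End Sieve.
End DistinctPrimes.

Lemma exp_le x y : x <= y -> exp x <= exp y.
Proof. intros [H | ->]; [apply Rlt_le, exp_increasing; auto | lra]. Qed.

Lemma exp_le_inv x y : exp x <= exp y -> x <= y.
Proof. intros H. destruct (Rle_lt_dec x y) as [| Hlt]; auto. apply exp_increasing in Hlt. lra. Qed.

Lemma ln_le x y : 0 < x -> x <= y -> ln x <= ln y.
Proof. intros H [H1 | ->]; [apply Rlt_le, ln_increasing; auto | lra]. Qed.

Lemma exp_pow a n : exp a ^ n = exp (INR n * a).
Proof.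
  induction n as [|n IH]; [simpl; rewrite Rmult_0_l, exp_0; lra |].
  rewrite S_INR, <- tech_pow_Rmult, IH, <- exp_plus. f_equal; ring.
Qed.

Lemma exp_ge_pow u n : 0 <= u -> (u / INR (S n)) ^ (S n) <= exp u.
Proof.
  intros Hu. replace (exp u) with (exp (u / INR (S n)) ^ (S n)).
  - apply pow_incr. split; [apply Rmult_le_pos; auto; apply Rlt_le, Rinv_0_lt_compat, lt_0_INR; lia |].
    pose proof (exp_ineq1_le (u / INR (S n))). lra.
  - rewrite exp_pow. f_equal. field. apply not_0_INR; lia.
Qed.

Lemma inv_one_minus_bounds u d : 0 <= u <= d -> d <= / 2 ->
  exp u <= / (1 - u) <= exp (u * (1 + 2 * d)).
Proof.
  intros Hu Hd. assert (Hpos : 0 < 1 - u) by lra. split.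
  - pose proof (exp_ineq1_le (- u)) as H. rewrite exp_Ropp in H. pose proof (exp_pos u).
    apply Rmult_le_reg_r with (1 - u); auto. rewrite Rinv_l by lra.
    apply Rmult_le_reg_l with (/ exp u); [apply Rinv_0_lt_compat; auto |].
    rewrite <- Rmult_assoc, Rinv_l, Rmult_1_l, Rmult_1_r by lra. lra.
  - pose proof (exp_ineq1_le (u * (1 + 2 * d))).
    assert (/ (1 - u) <= 1 + u + 2 * u * u).
    { apply Rmult_le_reg_r with (1 - u); auto. rewrite Rinv_l by lra. nra. }
    nra.
Qed.

Lemma euler_prod_bounds (p : nat -> nat) T P0 : 2 <= P0 ->
  (forall t, (t < T)%nat -> P0 <= INR (p t)) ->
  let sg := rsum (fun t => / INR (p t)) (seq 0 T) in
  exp sg <= euler_prod p T <= exp ((1 + 2 / P0) * sg).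
Proof.
  intros HP Hp sg. unfold euler_prod.
  assert (Hfold : forall f l, fold_right Rmult 1 (map f l) = rprod f l)
    by (induction l; simpl; congruence).
  rewrite Hfold. unfold sg. rewrite <- rsum_scal, <- !rprod_exp_sum.
  split; apply rprod_le; intros t Ht; apply in_seq in Ht; specialize (Hp t ltac:(lia));
    assert (Hu : 0 < / INR (p t) <= / P0)
      by (split; [apply Rinv_0_lt_compat; lra | apply Rinv_le_contravar; lra]);
    assert (/ P0 <= / 2) by (apply Rinv_le_contravar; lra);
    destruct (inv_one_minus_bounds (/ INR (p t)) (/ P0)) as [H1 H2]; try lra.
  - split; [apply Rlt_le, exp_pos | auto].
  - split; [apply Rlt_le, Rinv_0_lt_compat; lra |].
    replace ((1 + 2 / P0) * / INR (p t)) with (/ INR (p t) * (1 + 2 * / P0)) by (unfold Rdiv; ring).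
    auto.
Qed.

Lemma reciprocal_sum_bounds (p : nat -> nat) T P0 g : 2 <= P0 ->
  (forall t, (t < T)%nat -> P0 <= INR (p t)) ->
  / 2 * exp g <= euler_prod p T <= 3 / 2 * exp g ->
  let sg := rsum (fun t => / INR (p t)) (seq 0 T) in
  sg <= 1 + g /\ g <= 1 + (1 + 2 / P0) * sg.
Proof.
  intros HP Hp [Hlo Hhi] sg. destruct (euler_prod_bounds p T P0 HP Hp) as [E1 E2].
  assert (He : 2 <= exp 1) by (pose proof (exp_ineq1_le 1); lra).
  pose proof (exp_pos g). pose proof (exp_pos ((1 + 2 / P0) * sg)).
  split; apply exp_le_inv; rewrite exp_plus; fold sg in E1, E2; nra.
Qed.

(** Throughout, y = log log log x, Lam = (1 - eps) y =
    log log Q, l = L <= 2 y^(1/3), m = M, and r = 2 m l^2 is the bound on |I|;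
    every estimate compares a polynomial in y with an exponential in y. *)

Definition threshold (m eps : R) : R := 4 + 874800 * m ^ 7 + 200000 * m ^ 2 * (5 / eps) ^ 5.

Section Asymptotics.
Variables (m l y eps : R).
Hypothesis m_ge1 : 1 <= m.
Hypothesis eps_range : 0 < eps <= 1 / 2.
Hypothesis l_ge1 : 1 <= l.
Hypothesis l_cube : l ^ 3 <= 8 * y.
Hypothesis y_large : threshold m eps <= y.

Let Lam := (1 - eps) * y.
Let r := 2 * m * l * l.

Lemma threshold_parts : 4 <= y /\ 874800 * m ^ 7 <= y /\ 200000 * m ^ 2 * (5 / eps) ^ 5 <= y.
Proof.
  unfold threshold in y_large.
  assert (0 <= 874800 * m ^ 7) by (apply Rmult_le_pos; [lra | apply pow_le; lra]).
  assert (0 <= 200000 * m ^ 2 * (5 / eps) ^ 5).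
  { apply Rmult_le_pos; [apply Rmult_le_pos; [lra | apply pow_le; lra] |].
    apply pow_le, Rlt_le, Rdiv_lt_0_compat; lra. }
  lra.
Qed.

Lemma Lam_range : y / 2 <= Lam <= y.
Proof. pose proof threshold_parts. unfold Lam. split; nra. Qed.

Lemma l_le_y : l <= 8 * y.
Proof. pose proof threshold_parts. simpl in l_cube. assert (1 <= l * l) by nra. nra. Qed.

(* The smallest admissible prime, exp (exp (4 Lam / (m l))), exceeds 2r + 4 l Lam + 2. *)
Lemma prime_floor_large : 2 * r + 4 * l * Lam + 2 <= exp (exp (4 / (m * l) * Lam)).
Proof.
  destruct threshold_parts as [Hy [Hy7 _]]. pose proof Lam_range as HL. pose proof l_le_y as Hl8.
  assert (Hml : 0 < m * l) by nra.
  assert (Hm3 : 0 < m ^ 3) by (apply pow_lt; lra).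
  set (v := 4 / (m * l) * Lam).
  assert (Hv : v * (m * l) = 4 * Lam) by (unfold v; field; lra).
  assert (Hv0 : 0 <= v) by (unfold v; apply Rmult_le_pos; [apply Rlt_le, Rdiv_lt_0_compat |]; lra).
  (* Since l^3 <= 8 y and Lam >= y/2, the inner exponent satisfies v^3 m^3 >= y^2. *)
  assert (Hv3 : y ^ 2 <= v ^ 3 * m ^ 3).
  { assert (E : v ^ 3 * m ^ 3 * l ^ 3 = 64 * Lam ^ 3)
      by (replace (v ^ 3 * m ^ 3 * l ^ 3) with ((v * (m * l)) ^ 3) by ring; rewrite Hv; ring).
    assert (Lam ^ 3 >= y ^ 3 / 8).
    { pose proof (pow_incr (y / 2) Lam 3 ltac:(lra)).
      replace ((y / 2) ^ 3) with (y ^ 3 / 8) in H by field. lra. }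
    assert (0 <= v ^ 3 * m ^ 3) by (apply Rmult_le_pos; apply pow_le; lra).
    assert (v ^ 3 * m ^ 3 * l ^ 3 <= v ^ 3 * m ^ 3 * (8 * y)) by (apply Rmult_le_compat_l; auto).
    simpl in *. nra. }
  (* Hence exp v >= v^3 / 27 >= u := y^2 / (27 m^3). *)
  set (u := y ^ 2 / (27 * m ^ 3)).
  assert (Hu0 : 0 <= u) by (unfold u; apply Rmult_le_pos; [apply pow_le; lra | apply Rlt_le, Rinv_0_lt_compat; nra]).
  assert (Hu : u <= exp v).
  { pose proof (exp_ge_pow v 2 Hv0) as E1. replace (INR 3) with 3 in E1 by (simpl; ring).
    replace ((v / 3) ^ 3) with (v ^ 3 / 27) in E1 by field.
    apply Rle_trans with (v ^ 3 / 27); auto. apply Rmult_le_reg_r with (27 * m ^ 3); [nra |].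
    unfold u, Rdiv. rewrite Rmult_assoc, Rinv_l by nra. nra. }
  (* And exp u >= (u/2)^2 = y^4 / (2916 m^6), which beats the polynomial on the left. *)
  pose proof (exp_ge_pow u 1 Hu0) as E2. replace (INR 2) with 2 in E2 by (simpl; ring).
  apply Rle_trans with ((u / 2) ^ 2); [| apply Rle_trans with (exp u); [auto | apply exp_le; auto]].
  replace ((u / 2) ^ 2) with (y ^ 4 / (2916 * m ^ 6)) by (unfold u; field; lra).
  assert (Hm6 : 0 < m ^ 6) by (apply pow_lt; lra).
  assert (Hpoly : 2 * r + 4 * l * Lam + 2 <= 300 * m * y ^ 2).
  { unfold r. assert (l * l <= 64 * y * y) by nra. assert (l * Lam <= 8 * y * y) by nra. simpl. nra. }
  apply Rle_trans with (300 * m * y ^ 2); auto.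
  apply Rmult_le_reg_r with (2916 * m ^ 6); [nra |]. unfold Rdiv.
  replace (y ^ 4 * / (2916 * m ^ 6) * (2916 * m ^ 6)) with (y ^ 2 * y ^ 2) by (field; lra).
  replace (300 * m * y ^ 2 * (2916 * m ^ 6)) with (874800 * m ^ 7 * y ^ 2) by (simpl; ring).
  apply Rmult_le_compat_r; [apply pow_le; lra |].
  assert (m ^ 7 >= 1) by (rewrite <- (pow1 7); apply Rle_ge, pow_incr; lra). simpl. nra.
Qed.

Lemma exp_eps_large : 200000 * m ^ 2 * y ^ 4 <= exp (eps * y).
Proof.
  destruct threshold_parts as [Hy [_ Hy5]]. assert (Hey : 0 <= eps * y) by nra.
  pose proof (exp_ge_pow (eps * y) 4 Hey) as E. replace (INR 5) with 5 in E by (simpl; ring).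
  apply Rle_trans with ((eps * y / 5) ^ 5); auto.
  replace ((eps * y / 5) ^ 5) with (y * (eps / 5) ^ 5 * y ^ 4) by field.
  apply Rmult_le_compat_r; [apply pow_le; lra |].
  assert (0 < (eps / 5) ^ 5) by (apply pow_lt; lra).
  assert ((5 / eps) ^ 5 * (eps / 5) ^ 5 = 1)
    by (rewrite <- Rpow_mult_distr; replace (5 / eps * (eps / 5)) with 1 by (field; lra); apply pow1).
  nra.
Qed.

(* The exponent of the remainder term, Kc (log Q + 2 r) with Kc = O(m y^2),
   stays below log log x = exp y = log Q * exp (eps y) even after adding 2 l Lam. *)
Lemma error_exponent_small k E1 : 0 <= k <= 2 * r + 6 * l * (y + 1) -> 1 <= E1 ->
  2 * k * (E1 + 2 * r) + 2 * l * Lam <= E1 * exp (eps * y).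
Proof.
  intros Hk HE. destruct threshold_parts as [Hy _]. pose proof Lam_range as HL.
  pose proof l_le_y as Hl8. pose proof exp_eps_large as Hx. unfold r in *.
  assert (A1 : 2 * k <= 704 * m * y ^ 2).
  { assert (l * l <= 64 * y * y) by nra. assert (l * (y + 1) <= 16 * y * y) by nra. simpl. nra. }
  assert (A2 : 2 * (2 * m * l * l) <= 256 * m * y ^ 2) by (assert (l * l <= 64 * y * y) by nra; simpl; nra).
  assert (A3 : 2 * k * (E1 + 2 * (2 * m * l * l)) <= 704 * m * y ^ 2 * (E1 + 256 * m * y ^ 2))
    by (apply Rmult_le_compat; nra).
  assert (A4 : 2 * l * Lam <= 16 * y ^ 2) by (simpl; nra).
  assert (A5 : 704 * m * y ^ 2 * (E1 + 256 * m * y ^ 2) + 16 * y ^ 2 <= E1 * (200000 * m ^ 2 * y ^ 4)).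
  { assert (1 <= y ^ 2) by (simpl; nra). assert (y ^ 2 <= y ^ 4) by (simpl; nra).
    assert (m <= m ^ 2) by (simpl; nra).
    assert (0 <= m * y ^ 2) by (simpl; nra).
    assert (m * y ^ 2 <= m ^ 2 * y ^ 4) by (apply Rmult_le_compat; simpl; nra).
    assert (E1 * (m ^ 2 * y ^ 4) >= m ^ 2 * y ^ 4) by nra.
    assert (E1 * (m * y ^ 2) <= E1 * (m ^ 2 * y ^ 4)) by (apply Rmult_le_compat_l; lra).
    assert (y ^ 2 <= m ^ 2 * y ^ 4) by nra.
    replace (704 * m * y ^ 2 * (E1 + 256 * m * y ^ 2))
      with (704 * (E1 * (m * y ^ 2)) + 180224 * (m ^ 2 * y ^ 4)) by ring.
    nra. }
  assert (E1 * (200000 * m ^ 2 * y ^ 4) <= E1 * exp (eps * y)) by (apply Rmult_le_compat_l; lra).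
  lra.
Qed.

Lemma main_term_bound s (k0 : nat) :
  2 * l * Lam - r - 1 <= s <= r + 2 * l * Lam -> 2 * r + 6 * l * Lam <= INR k0 ->
  exp (- (1 - / Lam) * s) + (/ 2) ^ (2 * k0) * exp (2 * s) <= exp (4 * r - 2 * l * Lam).
Proof.
  intros Hs Hk. destruct threshold_parts as [Hy _]. pose proof Lam_range as HL.
  assert (Hr : l + 1 <= r) by (unfold r; nra).
  assert (HzL : / Lam * Lam = 1) by (field; lra).
  assert (Hz : 0 < / Lam <= 1).
  { split; [apply Rinv_0_lt_compat; lra | rewrite <- Rinv_1; apply Rinv_le_contravar; lra]. }
  assert (Hsift : exp (- (1 - / Lam) * s) <= exp (2 * r + 2 * l + 1 - 2 * l * Lam)).
  { apply exp_le.
    assert (/ Lam * s <= / Lam * (r + 2 * l * Lam)) by (apply Rmult_le_compat_l; lra).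
    replace (/ Lam * (r + 2 * l * Lam)) with (/ Lam * r + 2 * l * (/ Lam * Lam)) in H by ring.
    assert (/ Lam * r <= r) by nra. nra. }
  (* Truncation term: (1/4)^k0 <= exp (-k0) absorbs exp (2 s). *)
  assert (Htrunc : (/ 2) ^ (2 * k0) * exp (2 * s) <= exp (- 2 * l * Lam)).
  { rewrite pow_mult.
    assert (H4 : (/ 2) ^ 2 <= / exp 1).
    { pose proof exp_le_3. replace ((/ 2) ^ 2) with (/ 4) by field.
      apply Rinv_le_contravar; [apply exp_pos | lra]. }
    assert (((/ 2) ^ 2) ^ k0 <= (/ exp 1) ^ k0) by (apply pow_incr; split; [simpl; lra | auto]).
    rewrite (pow_inv (exp 1)), exp_pow, <- exp_Ropp in H.
    apply Rle_trans with (exp (- (INR k0 * 1)) * exp (2 * s));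
      [apply Rmult_le_compat_r; [apply Rlt_le, exp_pos | auto] |].
    rewrite <- exp_plus. apply exp_le. lra. }
  assert (Hsum : exp (2 * r + 2 * l + 1 - 2 * l * Lam) + exp (- 2 * l * Lam)
                 <= exp (2 * r + 2 * l + 1 - 2 * l * Lam) * exp 1).
  { assert (exp (- 2 * l * Lam) <= exp (2 * r + 2 * l + 1 - 2 * l * Lam)) by (apply exp_le; nra).
    pose proof (exp_ineq1_le 1). pose proof (exp_pos (2 * r + 2 * l + 1 - 2 * l * Lam)). nra. }
  rewrite <- exp_plus in Hsum.
  assert (exp (2 * r + 2 * l + 1 - 2 * l * Lam + 1) <= exp (4 * r - 2 * l * Lam)) by (apply exp_le; lra).
  lra.
Qed.

Lemma error_term_bound (T k0 : nat) :
  INR T <= exp (exp Lam) + 1 -> INR k0 <= 2 * r + 6 * l * (y + 1) ->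
  (1 + INR T * r) ^ (2 * k0) <= exp (exp y - 2 * l * Lam).
Proof.
  intros HT Hk. set (E1 := exp Lam) in *.
  assert (HE1 : 1 <= E1) by (unfold E1; pose proof (exp_ineq1_le Lam); pose proof Lam_range;
    destruct threshold_parts; lra).
  assert (Hr : 0 <= r) by (unfold r; nra).
  assert (Hbase : 1 + INR T * r <= exp (E1 + 2 * r)).
  { rewrite exp_plus. pose proof (exp_ineq1_le E1). pose proof (exp_ineq1_le (2 * r)).
    assert (INR T * r <= (exp E1 + 1) * r) by (apply Rmult_le_compat_r; lra).
    assert (exp E1 * (1 + 2 * r) <= exp E1 * exp (2 * r))
      by (apply Rmult_le_compat_l; [apply Rlt_le, exp_pos | lra]).
    nra. }
  apply Rle_trans with (exp (E1 + 2 * r) ^ (2 * k0)).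
  { apply pow_incr. pose proof (pos_INR T). split; [nra | auto]. }
  rewrite exp_pow. apply exp_le.
  replace (exp y) with (E1 * exp (eps * y)) by (unfold E1, Lam; rewrite <- exp_plus; f_equal; ring).
  pose proof (error_exponent_small (INR k0) E1 ltac:(split; [apply pos_INR | auto]) HE1).
  rewrite mult_INR. simpl (INR 2). lra.
Qed.
End Asymptotics.

Lemma up_nat_bounds a : 0 <= a -> a < INR (Z.to_nat (up a)) <= a + 1.
Proof.
  intros Ha. destruct (archimed a) as [H1 H2].
  assert (0 <= up a)%Z by (apply le_IZR; lra).
  rewrite INR_IZR_INZ, Z2Nat.id by auto. lra.
Qed.

Lemma injective_bounded_card (p : nat -> nat) T Q : 0 <= Q ->
  (forall t, (t < T)%nat -> INR (p t) <= Q) ->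
  (forall t1 t2, (t1 < T)%nat -> (t2 < T)%nat -> p t1 = p t2 -> t1 = t2) -> INR T <= Q + 1.
Proof.
  intros HQ Hp Hinj. destruct (up_nat_bounds Q HQ) as [U1 U2].
  set (n := Z.to_nat (up Q)) in *.
  enough (Hle : (T <= n)%nat) by (apply le_INR in Hle; lra).
  rewrite <- (length_seq T 0), <- (length_map p), <- (length_seq n 0).
  apply NoDup_incl_length.
  - apply NoDup_map_NoDup_ForallPairs; [| apply seq_NoDup].
    intros a b Ha Hb E. apply in_seq in Ha, Hb. apply Hinj; lia.
  - intros v Hv. apply in_map_iff in Hv. destruct Hv as [t [<- Ht]]. apply in_seq in Ht.
    apply in_seq. split; [lia |]. apply INR_lt. specialize (Hp t ltac:(lia)). simpl. lra.
Qed.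

Lemma weighted_reciprocal_sum_bounds (p : nat -> nat) T P0 g c :
  0 <= c -> 2 <= P0 -> 2 * (c + c * g) <= P0 ->
  (forall t, (t < T)%nat -> P0 <= INR (p t)) ->
  / 2 * exp g <= euler_prod p T <= 3 / 2 * exp g ->
  let s := rsum (fun t => c / INR (p t)) (seq 0 T) in
  c * g - c - 1 <= s <= c + c * g.
Proof.
  intros Hc HP0 HP0c Hp Heul s.
  destruct (reciprocal_sum_bounds p T P0 g HP0 Hp Heul) as [H1 H2].
  set (sg := rsum (fun t => / INR (p t)) (seq 0 T)) in *.
  assert (Es : s = c * sg) by (apply rsum_scal).
  assert (Hsg0 : 0 <= sg).
  { apply rsum_nonneg. intros t Ht. apply in_seq in Ht. specialize (Hp t ltac:(lia)).
    apply Rlt_le, Rinv_0_lt_compat. lra. }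
  assert (Hup : s <= c + c * g) by (rewrite Es; nra).
  (* 2 s / P0 <= 1 since s <= c + c g <= P0 / 2. *)
  assert (Hsmall : 2 / P0 * s <= 1).
  { apply Rmult_le_reg_r with P0; [lra |].
    replace (2 / P0 * s * P0) with (2 * s) by (field; lra). lra. }
  assert (c * g <= c * (1 + (1 + 2 / P0) * sg)) by (apply Rmult_le_compat_l; lra).
  replace (c * (1 + (1 + 2 / P0) * sg)) with (c + s + 2 / P0 * s) in H by (rewrite Es; ring).
  split; lra.
Qed.

Definition brun_half_length (B L : nat) (y : R) : nat := (2 * B + 6 * L * Z.to_nat (up y))%nat.

Lemma brun_half_length_bounds B L y Lam : 0 <= Lam <= y ->
  2 * INR B + 6 * INR L * Lam <= INR (brun_half_length B L y) <= 2 * INR B + 6 * INR L * (y + 1).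
Proof.
  intros HLam. destruct (up_nat_bounds y ltac:(lra)) as [H1 H2].
  unfold brun_half_length. rewrite plus_INR, !mult_INR.
  replace (INR 2) with 2 by (simpl; lra). replace (INR 6) with 6 by (simpl; lra).
  pose proof (pos_INR L). split; apply Rplus_le_compat_l, Rmult_le_compat_l; nra.
Qed.

Lemma sieve_terms_sum V n W X Y a b d :
  0 <= V -> 0 <= n <= 2 * W -> 0 <= X <= exp (a - d) -> Y <= exp (b - d) -> exp b <= W -> 0 <= a ->
  V * (n * X + Y) <= 3 * (exp a * V / exp d) * W.
Proof.
  intros HV Hn HX HY Hb Ha.
  assert (Hsub : forall c, exp (c - d) = exp c / exp d)
    by (intros c; unfold Rminus, Rdiv; rewrite exp_plus, exp_Ropp; reflexivity).
  rewrite Hsub in HX, HY. set (E := exp a / exp d) in *.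
  assert (Hd : 0 < / exp d) by apply Rinv_0_lt_compat, exp_pos.
  assert (HE : / exp d <= E) by (unfold E, Rdiv; pose proof (exp_ineq1_le a); nra).
  assert (n * X <= 2 * W * E) by (apply Rmult_le_compat; lra).
  assert (Y <= W * E) by (unfold Rdiv in HY; pose proof (exp_pos b); nra).
  replace (3 * (exp a * V / exp d) * W) with (V * (3 * W * E)) by (unfold E; field; apply Rgt_not_eq, exp_pos).
  apply Rmult_le_compat_l; lra.
Qed.

(* The estimate in terms of y = log log log x and Lam = (1 - eps) y = log log Q,
   for h ranging over [0, N) with N <= 2 W and log x = exp (exp y) <= W. *)
Lemma admissible_count_asymptotic (M L T N : nat) (p : nat -> nat) (eps y W : R) :
  let m := INR M in let l := INR L in let Lam := (1 - eps) * y in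
  let B := (2 * M * L * L)%nat in
  1 <= m -> 0 < eps <= 1 / 2 -> threshold m eps <= y -> 1 <= l -> l ^ 3 <= 8 * y ->
  (forall t, (t < T)%nat -> prime (Z.of_nat (p t))) ->
  (forall t1 t2, (t1 < T)%nat -> (t2 < T)%nat -> p t1 = p t2 -> t1 = t2) ->
  (forall t, (t < T)%nat -> exp (exp (4 / (m * l) * Lam)) <= INR (p t) <= exp (exp Lam)) ->
  / 2 * exp (1 / (m * l) * Lam) <= euler_prod p T <= 3 / 2 * exp (1 / (m * l) * Lam) ->
  INR N <= 2 * W -> exp (exp y) <= W ->
  INR (length (filter (admissibleb p T B) (seq 0 N))) <=
    3 * (exp (4 * INR B) * Lam ^ (B * B) / exp (2 * l * Lam)) * W.
Proof.
  intros m l Lam B Hm Heps Hy Hl Hl3 Hprime Hinj Hrange Heul HN HW.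
  destruct (threshold_parts m y eps Hm Heps Hy) as [Hy4 _].
  pose proof (Lam_range m y eps Hm Heps Hy) as HLam. fold Lam in HLam.
  assert (Er : INR B = 2 * m * l * l) by (unfold B; rewrite !mult_INR; reflexivity).
  pose proof (pos_INR B) as HB0.
  assert (Hml : 0 < m * l) by nra.
  pose proof (prime_floor_large m l y eps Hm Heps Hl Hl3 Hy) as HP0. fold Lam in HP0.
  rewrite <- Er in HP0. set (P0 := exp (exp (4 / (m * l) * Lam))) in *.
  assert (Hlarge : forall t, (t < T)%nat -> (B < p t)%nat).
  { intros t Ht. apply INR_lt. specialize (Hrange t Ht). nra. }
  assert (Hs : 2 * l * Lam - INR B - 1 <= rsum (fun t => INR B / INR (p t)) (seq 0 T) <= INR B + 2 * l * Lam).
  { assert (Eg : INR B * (1 / (m * l) * Lam) = 2 * l * Lam) by (rewrite Er; field; lra).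
    rewrite <- Eg. apply (weighted_reciprocal_sum_bounds p T P0); auto;
      [nra | nra | intros t Ht; apply (Hrange t Ht)]. }
  set (k0 := brun_half_length B L y).
  pose proof (brun_half_length_bounds B L y Lam ltac:(nra)) as Hk0. fold k0 l in Hk0.
  rewrite Er in Hs, Hk0.
  pose proof (main_term_bound m l y eps Hm Heps Hl Hy _ k0 Hs (proj1 Hk0)) as Hmain.
  pose proof (error_term_bound m l y eps Hm Heps Hl Hl3 Hy T k0
    ltac:(apply (injective_bounded_card p); [apply Rlt_le, exp_pos | intros t Ht; apply (Hrange t Ht) | auto])
    (proj2 Hk0)) as Herr.
  fold Lam in Hmain, Herr. rewrite <- Er in Hmain, Herr, Hs.
  eapply Rle_trans; [apply (admissible_count_bound p T Hprime Hinj B N (2 * k0) Lam);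
    auto; [lra | now rewrite Nat.even_mul] |].
  apply (sieve_terms_sum _ _ _ _ _ _ (exp y)); auto using pos_INR; [apply pow_le; lra | | lra].
  split; [| auto]. apply Rplus_le_le_0_compat; [apply Rlt_le, exp_pos |].
  apply Rmult_le_pos; [apply pow_le; lra | apply Rlt_le, exp_pos].
Qed.

Lemma Rpower_exp a c : Rpower (exp a) c = exp (c * a).
Proof. unfold Rpower. now rewrite ln_exp. Qed.

Lemma Q_of_exp eps x : Q_of eps x = exp (exp ((1 - eps) * ln (ln (ln x)))).
Proof. reflexivity. Qed.

Lemma iterated_log_large a x : exp (exp (exp a)) <= x ->
  a <= ln (ln (ln x)) /\ ln x = exp (exp (ln (ln (ln x)))).
Proof.
  intros Hx.
  assert (H1 : exp (exp a) <= ln x) by (rewrite <- (ln_exp (exp (exp a))); apply ln_le; auto using exp_pos).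
  assert (H2 : exp a <= ln (ln x)) by (rewrite <- (ln_exp (exp a)); apply ln_le; auto using exp_pos).
  split; [rewrite <- (ln_exp a); apply ln_le; auto using exp_pos |].
  pose proof (exp_pos a). pose proof (exp_pos (exp a)). rewrite !exp_ln; lra.
Qed.

Lemma L_of_bounds eps x : 0 <= eps -> 1 <= ln (ln (ln x)) ->
  1 <= INR (L_of eps x) /\ INR (L_of eps x) ^ 3 <= 8 * ln (ln (ln x)).
Proof.
  intros He. unfold L_of. set (y := ln (ln (ln x))). intros Hy.
  rewrite plus_INR. simpl (INR 1). set (a := Rpower y (1 / 3 - eps)).
  assert (Hfl : 0 <= INR (Z.to_nat (floorZ a)) <= a).
  { split; [apply pos_INR |]. unfold floorZ. destruct (base_Int_part a) as [H1 _].
    assert (0 <= a) by (unfold a, Rpower; apply Rlt_le, exp_pos).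
    destruct (Z_le_gt_dec 0 (Int_part a)).
    - rewrite INR_IZR_INZ, Z2Nat.id; auto.
    - replace (Z.to_nat (Int_part a)) with 0%nat by lia. simpl; lra. }
  set (b := Rpower y (1 / 3)).
  assert (Hab : a <= b) by (apply Rle_Rpower; lra).
  assert (Hb1 : 1 <= b)
    by (apply Rle_trans with (Rpower y 0); [rewrite Rpower_O; lra | apply Rle_Rpower; lra]).
  assert (Hb3 : b ^ 3 = y).
  { unfold b. rewrite <- Rpower_pow by (unfold Rpower; apply exp_pos). rewrite Rpower_mult.
    replace (1 / 3 * INR 3) with 1 by (simpl; field). apply Rpower_1; lra. }
  split; [lra |]. rewrite <- Hb3. replace (8 * b ^ 3) with ((2 * b) ^ 3) by ring.
  apply pow_incr; lra.
Qed.

Lemma H_list_bound (p : nat -> nat) T B (K x : R) : 2 <= K * ln x ->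
  exists N, INR N <= 2 * (K * ln x) /\
  INR (length (H_list p T B K x)) <= INR (length (filter (admissibleb p T B) (seq 0 N))).
Proof.
  intros HW. exists (Z.to_nat (up (K * ln x)) + 1)%nat. split.
  - rewrite plus_INR. destruct (up_nat_bounds (K * ln x)); simpl; lra.
  - apply le_INR. unfold H_list. generalize (seq 0 (Z.to_nat (up (K * ln x)) + 1)).
    induction l as [|h l IH]; simpl; [lia |].
    destruct Rle_dec, admissibleb; simpl; lia.
Qed.

Lemma exp_4B_le (M L : nat) : (1 <= M)%nat -> (1 <= L)%nat ->
  exp (4 * INR (2 * M * L * L)) <= INR (16 * M * L * L) ^ (8 * M * M * L * L * L * L).
Proof.
  intros HM HL.
  assert (Hbase : 16 <= INR (16 * M * L * L)).
  { replace 16 with (INR 16) by (simpl; lra). apply le_INR. nia. }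
  replace (4 * INR (2 * M * L * L)) with (INR (4 * (2 * M * L * L)) * 1)
    by (rewrite (mult_INR 4); simpl; ring).
  rewrite <- exp_pow. apply Rle_trans with (INR (16 * M * L * L) ^ (4 * (2 * M * L * L))).
  - apply pow_incr. pose proof exp_le_3. pose proof (exp_pos 1). lra.
  - apply Rle_pow; [lra | nia].
Qed.

Theorem lemma2p5 :
  forall K : nat, (2 <= K)%nat ->
  exists eps0 : R, 0 < eps0 /\
  forall eps : R, 0 < eps < eps0 ->
  exists C : R, 0 < C /\
  exists X : R, forall x : R, X <= x ->
  let L := L_of eps x in
  let Q := Q_of eps x in
  let M := M_of K in
  forall (T : nat) (p : nat -> nat),
    (forall t, (t < T)%nat -> prime (Z.of_nat (p t))) ->
    (forall t1 t2, (t1 < T)%nat -> (t2 < T)%nat -> p t1 = p t2 -> t1 = t2) ->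
    (forall t, (t < T)%nat ->
        exp (Rpower (ln Q) (4 / INR (M * L))) <= INR (p t) /\ INR (p t) <= Q) ->
    ((2 * M * L * L) ^ 2 <= T)%nat ->
    / 2 * Rpower (ln Q) (1 / INR (M * L)) <= euler_prod p T /\
    euler_prod p T <= 3 / 2 * Rpower (ln Q) (1 / INR (M * L)) ->
    INR (length (H_list p T (2 * M * L * L) (INR K) x)) <=
      C * (INR (16 * M * L * L) ^ (8 * M * M * L * L * L * L)
           * ln (ln Q) ^ (4 * M * M * L * L * L * L)
           / ln Q ^ (2 * L)) * (INR K * ln x).
Proof.
  intros K HK.
  assert (HM : (1 <= M_of K)%nat) by (unfold M_of; lia).
  assert (Hm : 1 <= INR (M_of K)) by (apply (le_INR 1); lia).
  exists (1 / 2). split; [lra |]. intros eps Heps.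
  exists 3. split; [lra |].
  exists (exp (exp (exp (threshold (INR (M_of K)) eps)))).
  intros x Hx L Q M T p Hprime Hinj Hrange _ Heul.
  destruct (iterated_log_large _ _ Hx) as [Hy Hlnx].
  destruct (threshold_parts _ _ eps Hm ltac:(lra) Hy) as [Hy4 _].
  destruct (L_of_bounds eps x ltac:(lra) ltac:(lra)) as [Hl1 Hl3]. fold L in Hl1, Hl3.
  set (y := ln (ln (ln x))) in *. set (Lam := (1 - eps) * y).
  assert (HL : (1 <= L)%nat) by (apply INR_le; simpl; lra).
  assert (EQ : Q = exp (exp Lam)) by apply Q_of_exp.
  rewrite EQ, ln_exp, !Rpower_exp, mult_INR in Hrange, Heul. rewrite EQ, !ln_exp, exp_pow.
  replace (4 * M * M * L * L * L * L)%nat with ((2 * M * L * L) * (2 * M * L * L))%nat by ring.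
  assert (HW : exp (exp y) <= INR K * ln x).
  { rewrite Hlnx. pose proof (exp_pos (exp y)). apply (le_INR 2) in HK. simpl in HK. nra. }
  destruct (H_list_bound p T (2 * M * L * L) (INR K) x) as [N [HN Hlen]].
  { pose proof (exp_ineq1_le (exp y)). pose proof (exp_ineq1_le y). lra. }
  eapply Rle_trans; [exact Hlen |].
  eapply Rle_trans; [apply (admissible_count_asymptotic M L T N p eps y (INR K * ln x)); auto; lra |].
  fold Lam.
  replace (INR (2 * L) * Lam) with (2 * INR L * Lam) by (rewrite mult_INR; simpl; ring).
  pose proof (exp_4B_le M L HM HL). pose proof (exp_pos (2 * INR L * Lam)).
  assert (0 <= Lam ^ (2 * M * L * L * (2 * M * L * L))) by (apply pow_le; unfold Lam; nra).
  apply Rmult_le_compat_r; [pose proof (exp_pos (exp y)); lra |]. apply Rmult_le_compat_l; [lra |].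
  unfold Rdiv. apply Rmult_le_compat_r; [apply Rlt_le, Rinv_0_lt_compat; auto |].
  apply Rmult_le_compat_r; auto.
Qed.
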